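(* Let $\mathcal{U}$ be a set of optimization problems equipped with a binary relation $\subseteq_{\mathcal{S}}$ (''is a subproblem of'') that is transitive: for all $\mathcal{P}_1,\mathcal{P}_2,\mathcal{P}_3\in\mathcal{U}$, if $\mathcal{P}_1\subseteq_{\mathcal{S}}\mathcal{P}_2$ and $\mathcal{P}_2\subseteq_{\mathcal{S}}\mathcal{P}_3$ then $\mathcal{P}_1\subseteq_{\mathcal{S}}\mathcal{P}_3$. Let $\mathbb{T}$ be a finite rooted tree whose nodes are labelled by problems in $\mathcal{U}$, whose root $\mathcal{R}$ satisfies $\mathcal{R}\subseteq_{\mathcal{S}}\mathcal{P}$ for every $\mathcal{P}\in\mathcal{U}$, and which is subproblem order-preserving, i.e. whenever node $\mathcal{P}_i$ is an ancestor of node $\mathcal{P}_j$, we have $\mathcal{P}_i\subseteq_{\mathcal{S}}\mathcal{P}_j$. Let $\mathcal{P}\in\mathcal{U}$ be a new problem, and let $\mathcal{P}^{(M)}$ be the node obtained by the following search: start at the current node $\mathcal{N}=\mathcal{R}$; while some child $\mathcal{Q}$ of $\mathcal{N}$ satisfies $\mathcal{Q}\subseteq_{\mathcal{S}}\mathcal{P}$, move $\mathcal{N}$ to one such child; when no child of $\mathcal{N}$ satisfies this, set $\mathcal{P}^{(M)}=\mathcal{N}$. Form the tree $\mathbb{T}'$ by inserting $\mathcal{P}$ as a new child of $\mathcal{P}^{(M)}$, and, for each child $\mathcal{P}^{(M)}_k$ of $\mathcal{P}^{(M)}$ in $\mathbb{T}$: if $\mathcal{P}\subseteq_{\mathcal{S}}\mathcal{P}^{(M)}_k$,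 re-attach $\mathcal{P}^{(M)}_k$ (with its subtree) as a child of $\mathcal{P}$; otherwise leave $\mathcal{P}^{(M)}_k$ as a child of $\mathcal{P}^{(M)}$ (a sibling of $\mathcal{P}$). Then $\mathbb{T}'$ is again subproblem order-preserving. Consequently, any sequence of such insertions starting from the tree consisting only of the root preserves the subproblem order-preserving property.
   Context: In the paper, problems are operations-research optimization problems and $\tilde{\mathcal{P}}\subseteq_{\mathcal{S}}\mathcal{P}$ means $\tilde{\mathcal{P}}$ is a subproblem of $\mathcal{P}$ (its optimization model is obtained from that of $\mathcal{P}$ by keeping a subset of the variables, the part of the objective depending only on them, and some of the constraints restricted to them); the paper asserts this relation is transitive. The root of the ''modeling tree'' is an abstract problem class of which every problem is regarded as a subproblem-extension. A modeling tree is called subproblem order-preserving if every ancestor node's problem is a subproblem of every descendant node's problem. The update procedure is the tree search followed by node insertion described in the claim. *)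

From Stdlib Require Import List Permutation.
Import ListNotations.

Inductive tree (U : Type) : Type :=
  | Node : U -> list (tree U) -> tree U.
Arguments Node {U} _ _.

Definition label {U : Type} (t : tree U) : U :=
  match t with Node x _ => x end.

Inductive subtree {U : Type} : tree U -> tree U -> Prop :=
  | subtree_refl : forall t, subtree t t
  | subtree_child : forall s c x ts, In c ts -> subtree s c -> subtree s (Node x ts).

Definition node_of {U : Type} (y : U) (t : tree U) : Prop :=
  exists ts, subtree (Node y ts) t.

Definition ancestor {U : Type} (t : tree U) (x y : U) : Prop :=
  exists ts c, subtree (Node x ts) t /\ In c ts /\ node_of y c.

Definition order_preserving {U : Type} (S : U -> U -> Prop) (t : tree U) : Prop :=
  forall x y, ancestor t x y -> S x y.

(* The order of children is irrelevant (up to permutation). *)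
Inductive insert_step {U : Type} (S : U -> U -> Prop) (P : U) :
    tree U -> tree U -> Prop :=
  | insert_here : forall x ts A B,
      Forall (fun c => ~ S (label c) P) ts ->
      Permutation (A ++ B) ts ->
      Forall (fun c => S P (label c)) A ->
      Forall (fun c => ~ S P (label c)) B ->
      insert_step S P (Node x ts) (Node x (Node P A :: B))
  | insert_descend : forall x l1 c c' l2,
      S (label c) P ->
      insert_step S P c c' ->
      insert_step S P (Node x (l1 ++ c :: l2)) (Node x (l1 ++ c' :: l2)).

Inductive reachable {U : Type} (S : U -> U -> Prop) (R : U) : tree U -> Prop :=
  | reach_root : reachable S R (Node R [])
  | reach_insert : forall t P t', reachable S R t -> insert_step S P t t' ->
      reachable S R t'.

(* Insertion keeps every old ancestor relation and creates only two new kinds: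
   the nodes on the descent path become ancestors of P, and P becomes an
   ancestor of the re-attached subtrees.  The first are subproblems of P because
   the descent only enters children Q with Q ⊆ P (and the root is ⊆ everything);
   the second because P ⊆ P_k for each re-attached child P_k, and P_k ⊆ every
   node below it, so transitivity applies. *)

From Stdlib Require Import List Permutation.
Import ListNotations.

Lemma in_app_cons_replace {T : Type} (d c c' : T) l1 l2 :
  In d (l1 ++ c' :: l2) -> d = c' \/ In d (l1 ++ c :: l2).
Proof.
  intros Hd. apply in_elt_inv in Hd as [-> | Hd]; [now left |].
  right. apply in_app_iff in Hd as [Hd | Hd]; apply in_app_iff; simpl; tauto.
Qed.

Section RoseTrees.
Context {U : Type}.

Lemma node_of_Node (y x : U) ts :
  node_of y (Node x ts) <-> y = x \/ exists c, In c ts /\ node_of y c.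
Proof.
  split.
  - intros [us H]. inversion H; subst.
    + now left.
    + right. exists c. split; [assumption | now exists us].
  - intros [-> | [c [Hc [us Hy]]]].
    + exists ts. constructor.
    + exists us. now apply subtree_child with c.
Qed.

Lemma ancestor_Node (a b x : U) ts :
  ancestor (Node x ts) a b <->
  (a = x /\ exists c, In c ts /\ node_of b c) \/
  (exists c, In c ts /\ ancestor c a b).
Proof.
  split.
  - intros [us [d [Hs [Hd Hb]]]]. inversion Hs; subst.
    + left. split; [reflexivity | now exists d].
    + right. exists c. split; [assumption | now exists us, d].
  - intros [[-> [c [Hc Hb]]] | [c [Hc [us [d [Hs [Hd Hb]]]]]]].
    + exists ts, c. repeat split; [constructor | assumption | assumption].
    + exists us, d. repeat split; [now apply subtree_child with c | assumption | assumption].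
Qed.

Variable S : U -> U -> Prop.

Lemma order_preserving_Node (x : U) ts :
  order_preserving S (Node x ts) <->
  (forall c y, In c ts -> node_of y c -> S x y) /\
  (forall c, In c ts -> order_preserving S c).
Proof.
  split.
  - intros Hx. split.
    + intros c y Hc Hy. apply Hx, ancestor_Node. left. split; [reflexivity | now exists c].
    + intros c Hc a b Hab. apply Hx, ancestor_Node. right. now exists c.
  - intros [Hroot Hchildren] a b Hab.
    apply ancestor_Node in Hab as [[-> [c [Hc Hb]]] | [c [Hc Hab]]].
    + now apply Hroot with c.
    + now apply (Hchildren c).
Qed.

Lemma order_preserving_leaf (x : U) : order_preserving S (Node x []).
Proof. apply order_preserving_Node. split; intros c; contradiction. Qed.

Lemma order_preserving_below_root t y :
  order_preserving S t -> node_of y t -> y = label t \/ S (label t) y.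
Proof.
  destruct t as [x ts]. intros Ht Hy.
  apply node_of_Node in Hy as [-> | [c [Hc Hy]]]; [now left |].
  right. apply order_preserving_Node in Ht. now apply (proj1 Ht) with c.
Qed.

Hypothesis S_trans : forall P1 P2 P3, S P1 P2 -> S P2 P3 -> S P1 P3.

Lemma order_preserving_graft (P : U) A :
  (forall e, In e A -> S P (label e)) ->
  (forall e, In e A -> order_preserving S e) ->
  order_preserving S (Node P A).
Proof.
  intros HPA HA. apply order_preserving_Node. split; [| assumption].
  intros e y He Hy.
  destruct (order_preserving_below_root e y (HA e He) Hy) as [-> | Hey].
  - now apply HPA.
  - apply S_trans with (label e); [now apply HPA | assumption].
Qed.

Variable P : U.

Lemma insert_step_label t t' : insert_step S P t t' -> label t' = label t.
Proof. now intros []. Qed.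

Lemma node_of_insert_step t t' y :
  insert_step S P t t' -> node_of y t' -> node_of y t \/ y = P.
Proof.
  intros Hins. revert y.
  induction Hins as [x ts A B _ Hperm _ _ | x l1 c c' l2 _ _ IH]; intros y Hy;
    apply node_of_Node in Hy as [-> | [d [Hd Hy]]];
    try (left; apply node_of_Node; now left).
  - assert (Hts : forall e, In e (A ++ B) -> node_of y e -> node_of y (Node x ts)).
    { intros e He Hye. apply node_of_Node. right. exists e.
      split; [now apply Permutation_in with (A ++ B) | assumption]. }
    destruct Hd as [<- | Hd].
    + apply node_of_Node in Hy as [-> | [e [He Hy]]]; [now right |].
      left. apply Hts with e; [apply in_or_app; now left | assumption].
    + left. apply Hts with d; [apply in_or_app; now right | assumption].
  - apply (in_app_cons_replace _ c) in Hd as [-> | Hd].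
    + destruct (IH y Hy) as [Hy' | ->]; [| now right].
      left. apply node_of_Node. right. exists c. split; [apply in_elt | assumption].
    + left. apply node_of_Node. right. now exists d.
Qed.

Lemma order_preserving_insert_step t t' :
  insert_step S P t t' -> S (label t) P -> order_preserving S t -> order_preserving S t'.
Proof.
  intros Hins. induction Hins as [x ts A B _ Hperm HA _ | x l1 c c' l2 Hc Hins IH];
    simpl; intros HxP Ht; apply order_preserving_Node in Ht as [Hroot Hchildren];
    apply order_preserving_Node.
  - assert (Hts : forall e, In e (A ++ B) -> In e ts)
      by (intros e He; now apply Permutation_in with (A ++ B)).
    split.
    + intros d y [<- | Hd] Hy.
      * apply node_of_Node in Hy as [-> | [e [He Hy]]]; [assumption |].
        apply Hroot with e; [apply Hts, in_or_app; now left | assumption].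
      * apply Hroot with d; [apply Hts, in_or_app; now right | assumption].
    + intros d [<- | Hd].
      * apply order_preserving_graft; [now apply Forall_forall |].
        intros e He. apply Hchildren, Hts, in_or_app. now left.
      * apply Hchildren, Hts, in_or_app. now right.
  - split.
    + intros d y Hd Hy. apply (in_app_cons_replace _ c) in Hd as [-> | Hd].
      * destruct (node_of_insert_step _ _ _ Hins Hy) as [Hy' | ->]; [| assumption].
        apply Hroot with c; [apply in_elt | assumption].
      * now apply Hroot with d.
    + intros d Hd. apply (in_app_cons_replace _ c) in Hd as [-> | Hd].
      * apply IH; [assumption | apply Hchildren, in_elt].
      * now apply Hchildren.
Qed.

End RoseTrees.

Lemma reachable_label {U : Type} (S : U -> U -> Prop) (R : U) t :
  reachable S R t -> label t = R.
Proof.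
  induction 1 as [| t P t' _ IH Hins]; [reflexivity |].
  now rewrite (insert_step_label _ _ _ _ Hins).
Qed.

Theorem proposition1 (U : Type) (S : U -> U -> Prop)
  (S_trans : forall P1 P2 P3, S P1 P2 -> S P2 P3 -> S P1 P3)
  (R : U) (R_min : forall P, S R P) :
  (forall (t t' : tree U) (P : U),
      label t = R ->
      order_preserving S t ->
      insert_step S P t t' ->
      order_preserving S t')
  /\
  (forall t : tree U, reachable S R t -> order_preserving S t).
Proof.
  assert (Hstep : forall (t t' : tree U) (P : U),
             label t = R -> order_preserving S t -> insert_step S P t t' ->
             order_preserving S t').
  { intros t t' P Hroot Ht Hins.
    apply (order_preserving_insert_step S S_trans P t t' Hins); [| assumption].
    rewrite Hroot. apply R_min. }
  split; [exact Hstep |].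
  induction 1 as [| t P t' Hreach IH Hins].
  - apply order_preserving_leaf.
  - exact (Hstep t t' P (reachable_label S R t Hreach) IH Hins).
Qed.
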